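(* A ring $R$ is almost Armendariz if and only if the Laurent polynomial ring $R[x,x^{-1}]$ is almost Armendariz.
   Context: All rings are associative with identity. For a ring $R$, $P(R)$ denotes the prime radical of $R$ (the intersection of all prime ideals of $R$, equivalently the set of strongly nilpotent elements of $R$). A ring $R$ is called almost Armendariz if whenever $f(x)=\sum_{i=0}^m a_ix^i$ and $g(x)=\sum_{j=0}^n b_jx^j\in R[x]$ satisfy $f(x)g(x)=0$, then $a_ib_j\in P(R)$ for all $0\le i\le m$, $0\le j\le n$. *)

From HB Require Import structures.
From mathcomp Require Import all_boot all_order all_algebra.
From Stdlib Require Import Lia.
Set Implicit Arguments. Unset Strict Implicit. Unset Printing Implicit Defensive.
Import GRing.Theory.
Local Open Scope ring_scope.
Local Open Scope quotient_scope.

(* Laurent polynomial ring R[x, x^{-1}] over a (not necessarily commutative)  *)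
(* ring R, built as the quotient of {poly R} * nat, where (p, n) stands for   *)
(* p * x^{-n}, by the relation (p, n) ~ (q, m) <-> p * X^m = q * X^n.          *)
(* x is central, so this is the usual Laurent polynomial ring.                *)
Module Laurent.
Section Laurent.
Variable R : nzRingType.
Local Notation T := ({poly R} * nat)%type.
Implicit Types x y z : T.

Lemma mulXnC (p : {poly R}) n : p * 'X^n = 'X^n * p.
Proof. exact: commr_polyXn. Qed.

Lemma mulXnA (p : {poly R}) i j : p * 'X^i * 'X^j = p * 'X^(i + j).
Proof. by rewrite -mulrA -exprD. Qed.

Lemma mulXnI n (p q : {poly R}) : p * 'X^n = q * 'X^n -> p = q.
Proof. by move=> h; rewrite -(drop_polyMXn_id n p) h drop_polyMXn_id. Qed.

Lemma eqXn a b (p : {poly R}) : a = b -> p * 'X^a = p * 'X^b.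
Proof. by move->. Qed.

Ltac nat_lia := rewrite -?plusE; lia.

Definition equivl x y := x.1 * 'X^(y.2) == y.1 * 'X^(x.2).

Lemma equivl_refl : reflexive equivl.
Proof. by move=> x; rewrite /equivl. Qed.

Lemma equivl_sym : symmetric equivl.
Proof. by move=> x y; rewrite /equivl eq_sym. Qed.

Lemma equivl_trans : transitive equivl.
Proof.
move=> [q m] [p n] [r k]; rewrite /equivl /= => /eqP h1 /eqP h2; apply/eqP.
apply: (@mulXnI m).
rewrite mulXnA addnC -mulXnA h1 mulXnA addnC -mulXnA h2 !mulXnA addnC //.
Qed.

Canonical equivl_equiv := EquivRel equivl equivl_refl equivl_sym equivl_trans.

Definition type := {eq_quot equivl}.
HB.instance Definition _ : EqQuotient _ equivl type := EqQuotient.on type.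
HB.instance Definition _ := Choice.on type.

Definition addl x y : T := (x.1 * 'X^(y.2) + y.1 * 'X^(x.2), (x.2 + y.2)%N).
Definition mull x y : T := (x.1 * y.1, (x.2 + y.2)%N).
Definition oppl x : T := (- x.1, x.2).

Lemma addl_compat x x' y y' : equivl x x' -> equivl y y' ->
  equivl (addl x y) (addl x' y').
Proof.
case: x x' y y' => [p n] [p' n'] [q m] [q' m']; rewrite /equivl /=.
move=> /eqP h1 /eqP h2; apply/eqP; rewrite !mulrDl !mulXnA.
rewrite (@eqXn (m + _) (n' + (m + m'))); last by rewrite -!plusE; lia.
rewrite -(mulXnA p n') h1 mulXnA.
rewrite (@eqXn (n + (n' + m')) (m' + (n + n'))); last by nat_lia.
rewrite -(mulXnA q m') h2 mulXnA.
by congr (_ * 'X^_ + _ * 'X^_); nat_lia.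
Qed.

Lemma mulXnAC (p q : {poly R}) n : p * 'X^n * q = p * q * 'X^n.
Proof. by rewrite -mulrA -mulXnC mulrA. Qed.

Lemma mull_compat x x' y y' : equivl x x' -> equivl y y' ->
  equivl (mull x y) (mull x' y').
Proof.
case: x x' y y' => [p n] [p' n'] [q m] [q' m']; rewrite /equivl /=.
move=> /eqP h1 /eqP h2; apply/eqP.
rewrite addnC -mulXnA -(mulrA p q) h2 mulrA mulXnA addnC -mulXnA.
by rewrite -(mulrA p q') (mulXnC q') mulrA h1 mulXnAC mulXnA.
Qed.

Lemma oppl_compat x x' : equivl x x' -> equivl (oppl x) (oppl x').
Proof.
case: x x' => [p n] [p' n']; rewrite /equivl /= !mulNr => /eqP ->.
exact: eqxx.
Qed.

Lemma equivl_pi x y : equivl x y -> \pi_type x = \pi_type y.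
Proof. by move=> h; apply/eqmodP. Qed.

Definition zero : type := \pi_type (0, 0%N).
Definition one : type := \pi_type (1, 0%N).
Definition add := lift_op2 type addl.
Definition mul := lift_op2 type mull.
Definition opp := lift_op1 type oppl.

Lemma pi_add : {morph \pi : x y / addl x y >-> add x y}.
Proof.
move=> x y; unlock add; apply/eqmodP; rewrite /=.
by apply: addl_compat; rewrite equivl_sym; apply/eqmodP; rewrite reprK.
Qed.
Canonical pi_add_morph := PiMorph2 pi_add.

Lemma pi_mul : {morph \pi : x y / mull x y >-> mul x y}.
Proof.
move=> x y; unlock mul; apply/eqmodP; rewrite /=.
by apply: mull_compat; rewrite equivl_sym; apply/eqmodP; rewrite reprK.
Qed.
Canonical pi_mul_morph := PiMorph2 pi_mul.

Lemma pi_opp : {morph \pi : x / oppl x >-> opp x}.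
Proof.
move=> x; unlock opp; apply/eqmodP; rewrite /=.
by apply: oppl_compat; rewrite equivl_sym; apply/eqmodP; rewrite reprK.
Qed.
Canonical pi_opp_morph := PiMorph1 pi_opp.

Lemma laddA : associative add.
Proof.
elim/quotW=> [[p n]]; elim/quotW=> [[q m]]; elim/quotW=> [[r k]].
rewrite !piE; congr \pi; rewrite /addl /=; congr (_, _); last by rewrite addnA.
rewrite !mulrDl !mulXnA addrA; congr (_ * 'X^_ + _ * 'X^_ + _ * 'X^_);
  by rewrite -!plusE; lia.
Qed.

Lemma laddC : commutative add.
Proof.
elim/quotW=> [[p n]]; elim/quotW=> [[q m]]; rewrite !piE; congr \pi.
by rewrite /addl /= addrC addnC.
Qed.

Lemma ladd0r : left_id zero add.
Proof.
elim/quotW=> [[p n]]; rewrite /zero !piE; congr \pi.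
by rewrite /addl /= mul0r add0r expr0 mulr1 add0n.
Qed.

Lemma laddNr : left_inverse zero opp add.
Proof.
elim/quotW=> [[p n]]; rewrite /zero !piE; apply/equivl_pi.
by rewrite /equivl /addl /oppl /= mulNr addNr !mul0r.
Qed.

HB.instance Definition _ := GRing.isZmodule.Build type laddA laddC ladd0r laddNr.

Lemma lmulA : associative mul.
Proof.
elim/quotW=> [[p n]]; elim/quotW=> [[q m]]; elim/quotW=> [[r k]].
by rewrite !piE; congr \pi; rewrite /mull /= mulrA addnA.
Qed.

Lemma lmul1r : left_id one mul.
Proof.
elim/quotW=> [[p n]]; rewrite /one !piE; congr \pi.
by rewrite /mull /= mul1r add0n.
Qed.

Lemma lmulr1 : right_id one mul.
Proof.
elim/quotW=> [[p n]]; rewrite /one !piE; congr \pi.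
by rewrite /mull /= mulr1 addn0.
Qed.

Lemma lmulrDl : left_distributive mul add.
Proof.
elim/quotW=> [[p n]]; elim/quotW=> [[q m]]; elim/quotW=> [[r k]].
rewrite !piE; apply/equivl_pi; rewrite /equivl /addl /mull /=; apply/eqP.
rewrite !mulrDl (mulXnAC p) (mulXnAC q) !mulXnA.
by congr (_ * 'X^_ + _ * 'X^_); rewrite -!plusE; lia.
Qed.

Lemma lmulrDr : right_distributive mul add.
Proof.
elim/quotW=> [[p n]]; elim/quotW=> [[q m]]; elim/quotW=> [[r k]].
rewrite !piE; apply/equivl_pi; rewrite /equivl /addl /mull /=; apply/eqP.
rewrite !mulrDl !mulrDr mulrDl !mulrA !mulXnA.
by congr (_ * 'X^_ + _ * 'X^_); rewrite -!plusE; lia.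
Qed.

Lemma loner_neq0 : one != 0 :> type.
Proof.
rewrite /one /= -[0]/zero /zero piE /equivl /= !expr0 !mulr1.
exact: oner_neq0.
Qed.

HB.instance Definition _ := GRing.Zmodule_isNzRing.Build type
  lmulA lmul1r lmulr1 lmulrDl lmulrDr loner_neq0.

Definition x : type := \pi_type ('X, 0%N).
Definition xinv : type := \pi_type (1, 1%N).

Lemma x_xinv : x * xinv = 1.
Proof.
change (mul x xinv = one); rewrite /x /xinv /one piE.
by apply/equivl_pi; rewrite /equivl /= ?expr0 ?expr1 ?mulr1 ?mul1r ?add0n ?addn0.
Qed.

Lemma xinv_x : xinv * x = 1.
Proof.
change (mul xinv x = one); rewrite /x /xinv /one piE.
by apply/equivl_pi; rewrite /equivl /= ?expr0 ?expr1 ?mulr1 ?mul1r ?add0n ?addn0.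
Qed.

End Laurent.
End Laurent.
HB.export Laurent.


Notation laurent R := (Laurent.type R).

Definition is_ideal (R : nzRingType) (I : R -> Prop) : Prop :=
  [/\ I 0,
      (forall a b, I a -> I b -> I (a + b)),
      (forall a, I a -> I (- a)),
      (forall r a, I a -> I (r * a)) &
      (forall a r, I a -> I (a * r))].

Definition is_prime_ideal (R : nzRingType) (I : R -> Prop) : Prop :=
  [/\ is_ideal I, ~ I 1 &
      (forall a b, (forall r, I (a * r * b)) -> I a \/ I b)].

Definition prime_radical (R : nzRingType) (a : R) : Prop :=
  forall I : R -> Prop, is_prime_ideal I -> I a.

Definition almost_armendariz (R : nzRingType) : Prop :=
  forall f g : {poly R}, f * g = 0 ->
    forall i j : nat, prime_radical (f`_i * g`_j).

From HB Require Import structures.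
From mathcomp Require Import all_boot all_order all_algebra.
From mathcomp Require Import zify.
From Stdlib Require Import Classical.
Set Implicit Arguments. Unset Strict Implicit. Unset Printing Implicit Defensive.
Import GRing.Theory.
Local Open Scope ring_scope.
Local Open Scope quotient_scope.

(* Both directions rest on P(R) = R ∩ P(R[x,x^-1]).  Every Laurent polynomial
   is a sum of constants times the central elements x^k x^-n, so prime ideals
   of R[x,x^-1] contract to prime ideals of R; conversely a prime ideal I of R
   extends to the prime ideal I[x,x^-1] (Laurent polynomials with all
   coefficients in I), whose trace on R is I.  Hence R[y] ⊆ R[x,x^-1][y]
   transfers the property down.  Upwards, clear denominators: F G = 0 in
   R[x,x^-1][y] gives f g = 0 in R[x][y] with F_i = f_i x^-N, G_j = g_j x^-M;
   the Kronecker substitution y := x^K, K beyond all x-degrees, turns f g = 0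
   into a product zero in R[x] whose coefficients are exactly those of the f_i
   and g_j, so all of them multiply into P(R), and then F_i G_j lies in the
   ideal P(R[x,x^-1]). *)

Section Ideals.
Variable A : nzRingType.

Lemma ideal_sum (I : A -> Prop) (J : Type) (r : seq J) (P : pred J) (F : J -> A) :
  is_ideal I -> (forall j, P j -> I (F j)) -> I (\sum_(j <- r | P j) F j).
Proof. by case=> I0 ID _ _ _ IF; apply: big_ind. Qed.

Lemma prime_radical_ideal : is_ideal (@prime_radical A).
Proof.
split=> [Q [[]] | a b ha hb Q hQ | a ha Q hQ | r a ha Q hQ | a r ha Q hQ] //;
  case: (hQ) => -[_ ID IN IMl IMr] _ _;
  [apply: ID; [exact: ha | exact: hb] | apply: IN | apply: IMl | apply: IMr];
  exact: ha.
Qed.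

End Ideals.

Lemma ex_least (P : nat -> Prop) n :
  P n -> exists2 m, P m & forall k, (k < m)%N -> ~ P k.
Proof.
elim/ltn_ind: n => n IH Pn.
case: (classic (exists2 k, (k < n)%N & P k)) => [[k ltkn Pk] | none].
  exact: IH Pk.
by exists n => // k ltkn Pk; apply: none; exists k.
Qed.

Section CentralizingMorphism.
Variables (A B : nzRingType) (phi : {rmorphism A -> B}).
Hypothesis phi_span : forall b : B, exists n (c : 'I_n -> A) (z : 'I_n -> B),
  (forall k y, z k * y = y * z k) /\ b = \sum_(k < n) phi (c k) * z k.

Lemma prime_ideal_preim (Q : B -> Prop) :
  is_prime_ideal Q -> is_prime_ideal (fun a => Q (phi a)).
Proof.
case=> -[Q0 QD QN QMl QMr] Q1 Qprime; split; first split.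
- by rewrite rmorph0.
- by move=> a b ha hb; rewrite rmorphD; apply: QD.
- by move=> a ha; rewrite rmorphN; apply: QN.
- by move=> r a ha; rewrite rmorphM; apply: QMl.
- by move=> a r ha; rewrite rmorphM; apply: QMr.
- by rewrite rmorph1.
move=> a b hab; apply: Qprime => y.
have [n [c [z [zC ->]]]] := phi_span y.
rewrite mulr_sumr mulr_suml; apply: ideal_sum => // k _.
by rewrite !mulrA -(mulrA _ (z k)) zC mulrA -!rmorphM; apply: QMr.
Qed.

Lemma prime_radical_rmorph a : prime_radical a -> prime_radical (phi a).
Proof. by move=> ha Q /prime_ideal_preim; apply: ha. Qed.

End CentralizingMorphism.

Definition poly_ideal (R : nzRingType) (I : R -> Prop) (p : {poly R}) : Prop :=
  forall k, I p`_k.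

Lemma poly_ideal_mulXn (R : nzRingType) (I : R -> Prop) (p : {poly R}) n :
  poly_ideal I (p * 'X^n) -> poly_ideal I p.
Proof. by move=> h k; have := h (k + n)%N; rewrite coefMXn ltnNge leq_addl addnK. Qed.

Lemma coef_mulC_mul_split (R : nzRingType) (p q : {poly R}) r i j :
  (p * r%:P * q)`_(i + j) = p`_i * r * q`_j
    + \sum_(k < (i + j).+1 | k != i :> nat) p`_k * r * q`_(i + j - k).
Proof.
have ltij : (i < (i + j).+1)%N by rewrite ltnS leq_addr.
by rewrite coefM (bigD1 (Ordinal ltij)) //= coefMC addKn; under eq_bigr do rewrite coefMC.
Qed.

Lemma poly_ideal_prime (R : nzRingType) (I : R -> Prop) :
  is_prime_ideal I -> is_prime_ideal (poly_ideal I).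
Proof.
move=> Iprime.
have [[I0 ID IN IMl IMr] I1 Ip] := Iprime.
have Iideal : is_ideal I by case: Iprime.
split; first split.
- by move=> k; rewrite coef0.
- by move=> p q hp hq k; rewrite coefD; apply: ID.
- by move=> p hp k; rewrite coefN; apply: IN.
- by move=> r p hp k; rewrite coefM; apply: ideal_sum => // j _; apply: IMl.
- by move=> p r hp k; rewrite coefM; apply: ideal_sum => // j _; apply: IMr.
- by move/(_ 0%N); rewrite coef1.
move=> p q hpq.
case: (classic (poly_ideal I p)) => [|/not_all_ex_not [k0 pk0]]; first by left.
case: (classic (poly_ideal I q)) => [|/not_all_ex_not [l0 ql0]]; first by right.
have [i pi_notin below_i] := ex_least (P := fun k => ~ I p`_k) pk0.
have [j qj_notin below_j] := ex_least (P := fun k => ~ I q`_k) ql0.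
(* In the coefficient of index [i + j] of [p r q], every term other than
   [p_i r q_j] has a factor [p_k] with [k < i] or [q_l] with [l < j]. *)
suff /Ip [] : forall r, I (p`_i * r * q`_j) by [].
move=> r; have := hpq r%:P (i + j)%N; rewrite coef_mulC_mul_split => hsum.
have rest : I (\sum_(k < (i + j).+1 | k != i :> nat) p`_k * r * q`_(i + j - k)).
  apply: ideal_sum => // k ki.
  case: (ltngtP k i) => [ltki | ltik | eqki].
  - by apply: (IMr); apply: IMr; apply: NNPP; apply: below_i.
  - by apply: IMl; apply: NNPP; apply: below_j; have := ltn_ord k; lia.
  - by rewrite eqki eqxx in ki.
by have := ID _ _ hsum (IN _ rest); rewrite addrK.
Qed.

Section LaurentFractions.
Variable R : nzRingType.
Local Notation L := (laurent R).
Implicit Types (p q : {poly R}) (l : L).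

Definition lfrac p n : L := \pi_L (p, n).

Lemma lfracW (P : L -> Prop) : (forall p n, P (lfrac p n)) -> forall l, P l.
Proof. by move=> h; elim/quotW => -[p n]; apply: h. Qed.

Lemma lfrac_eq p n q m : lfrac p n = lfrac q m <-> p * 'X^m = q * 'X^n.
Proof.
by split=> [/eqmodP/eqP | /eqP e]; last exact: Laurent.equivl_pi.
Qed.

Lemma lfracD p n q m : lfrac p n + lfrac q m = lfrac (p * 'X^m + q * 'X^n) (n + m).
Proof. exact: (esym (Laurent.pi_add _ _)). Qed.

Lemma lfracM p n q m : lfrac p n * lfrac q m = lfrac (p * q) (n + m).
Proof. exact: (esym (Laurent.pi_mul _ _)). Qed.

Lemma lfracN p n : - lfrac p n = lfrac (- p) n.
Proof. exact: (esym (Laurent.pi_opp _)). Qed.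

Lemma lfrac0 n : lfrac 0 n = 0.
Proof. by apply/lfrac_eq; rewrite !mul0r. Qed.

Lemma lfrac1 : lfrac 1 0 = 1.
Proof. by []. Qed.

Lemma lfrac_eq0 p n : lfrac p n = 0 -> p = 0.
Proof. by rewrite -(lfrac0 0) => /lfrac_eq; rewrite expr0 mulr1 mul0r. Qed.

Lemma lfrac_mulXn p n k : lfrac (p * 'X^k) (n + k) = lfrac p n.
Proof. by apply/lfrac_eq; rewrite -mulrA -exprD addnC. Qed.

Lemma lfracXn_central k n l : lfrac 'X^k n * l = l * lfrac 'X^k n.
Proof.
elim/lfracW: l => p m; rewrite !lfracM addnC; congr lfrac.
by rewrite commr_polyXn.
Qed.

Definition lpoly p : L := lfrac p 0.

Lemma lpoly_is_zmod_morphism : zmod_morphism lpoly.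
Proof. by move=> p q; rewrite /lpoly lfracN lfracD !expr0 !mulr1. Qed.

Lemma lpoly_is_monoid_morphism : monoid_morphism lpoly.
Proof. by split=> // p q; rewrite /lpoly lfracM. Qed.

HB.instance Definition _ :=
  GRing.isZmodMorphism.Build {poly R} L lpoly lpoly_is_zmod_morphism.
HB.instance Definition _ :=
  GRing.isMonoidMorphism.Build {poly R} L lpoly lpoly_is_monoid_morphism.

Lemma lfrac_lpoly p n : lfrac p n = lpoly p * lfrac 1 n.
Proof. by rewrite /lpoly lfracM mulr1. Qed.

Lemma lfrac_span p n :
  lfrac p n = \sum_(k < size p) lpoly (p`_k)%:P * lfrac 'X^k n.
Proof.
rewrite lfrac_lpoly -{1}(coefK p) poly_def rmorph_sum mulr_suml.
by apply: eq_bigr => k _; rewrite -mul_polyC rmorphM -mulrA -lfrac_lpoly.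
Qed.

End LaurentFractions.

Definition laurent_ideal (R : nzRingType) (J : {poly R} -> Prop) (l : laurent R) :=
  J (repr l).1.

Section LaurentIdeal.
Variables (R : nzRingType) (J : {poly R} -> Prop).
Hypotheses (Jideal : is_ideal J) (J_mulXn : forall p n, J (p * 'X^n) -> J p).

Lemma laurent_idealE p n : laurent_ideal J (lfrac p n) <-> J p.
Proof.
have [_ _ _ _ JMr] := Jideal.
rewrite /laurent_ideal; case: (repr _) (reprK (lfrac p n)) => q m /lfrac_eq /= e.
split=> h; [apply: (J_mulXn (n := m)); rewrite -e | apply: (J_mulXn (n := n)); rewrite e];
  exact: JMr.
Qed.

Lemma laurent_ideal_prime : is_prime_ideal J -> is_prime_ideal (laurent_ideal J).
Proof.
case=> -[J0 JD JN JMl JMr] J1 Jp; split; first split.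
- by rewrite -(lfrac0 _ 0) laurent_idealE.
- elim/lfracW=> p n; elim/lfracW=> q m; rewrite lfracD !laurent_idealE => hp hq.
  by apply: JD; [apply: JMr | apply: JMr].
- by elim/lfracW=> p n; rewrite lfracN !laurent_idealE; apply: JN.
- by elim/lfracW=> r k; elim/lfracW=> p n; rewrite lfracM !laurent_idealE; apply: JMl.
- by elim/lfracW=> p n; elim/lfracW=> r k; rewrite lfracM !laurent_idealE; apply: JMr.
- by rewrite -lfrac1 laurent_idealE.
elim/lfracW=> p n; elim/lfracW=> q m hpq.
have /Jp [] : forall r, J (p * r * q).
  by move=> r; have := hpq (lfrac r 0); rewrite !lfracM laurent_idealE.
- by left; rewrite laurent_idealE.
- by right; rewrite laurent_idealE.
Qed.

End LaurentIdeal.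

Section LaurentPrimeRadical.
Variable R : nzRingType.
Local Notation L := (laurent R).

Lemma lpolyC_span (l : L) : exists n (c : 'I_n -> R) (z : 'I_n -> L),
  (forall k y, z k * y = y * z k) /\ l = \sum_(k < n) (@lpoly R \o polyC) (c k) * z k.
Proof.
elim/lfracW: l => p n.
exists (size p), (fun k => p`_k), (fun k => lfrac 'X^k n); split.
- by move=> k y; apply: lfracXn_central.
- exact: lfrac_span.
Qed.

Lemma prime_radical_lpolyC (c : R) : prime_radical (lpoly c%:P) <-> prime_radical c.
Proof.
split=> [h I Iprime | ]; last exact: (prime_radical_rmorph lpolyC_span).
have PIprime := poly_ideal_prime Iprime.
have [PIideal _ _] := PIprime.
have PI_mulXn := @poly_ideal_mulXn _ I.
have := h _ (laurent_ideal_prime PIideal PI_mulXn PIprime).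
by rewrite laurent_idealE // => /(_ 0%N); rewrite coefC.
Qed.

Lemma prime_radical_lpoly (s : {poly R}) :
  (forall k, prime_radical s`_k) -> prime_radical (lpoly s).
Proof.
have [_ _ _ _ PMr] := prime_radical_ideal L.
move=> hs; rewrite [lpoly s]lfrac_span.
apply: ideal_sum (prime_radical_ideal L) _ => k _.
by apply: PMr; apply/prime_radical_lpolyC.
Qed.

End LaurentPrimeRadical.

Section KroneckerSubstitution.
Variable R : nzRingType.
Implicit Types f g : {poly {poly R}}.

Lemma coef_size_bound f : exists K, forall i, (size (f`_i)%R <= K)%N.
Proof.
exists (\max_(i < size f) size (f`_i)%R)%N => i.
case: (ltnP i (size f)) => [ltif | leif]; last by rewrite nth_default ?size_poly0.
exact: (@leq_bigmax _ (fun i : 'I_(size f) => size f`_i) (Ordinal ltif)).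
Qed.

(* Substituting 'X^K for the outer variable places the coefficients of the
   [f`_i], all of size at most K, in disjoint blocks [K * i + d], [d < K]. *)
Lemma coef_horner_Xn f K i d : (forall j, (size (f`_j)%R <= K)%N) -> (d < K)%N ->
  (f.['X^K])`_(K * i + d) = f`_i`_d.
Proof.
move=> szf ltdK; rewrite horner_coef coef_sum.
have other j : j != i :> nat -> (f`_j * 'X^K ^+ j)`_(K * i + d) = 0.
  move=> neji; rewrite -exprM coefMXn; case: ltnP => // leKj.
  apply: nth_default; apply: leq_trans (szf j) _.
  case: (ltngtP i j) neji => [ltij | ltji | ->]; rewrite ?eqxx //= => _.
  - have : (K * i.+1 <= K * j)%N by rewrite leq_mul2l ltij orbT.
    by rewrite mulnS; lia.
  - have : (K * j.+1 <= K * i)%N by rewrite leq_mul2l ltji orbT.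
    by rewrite mulnS; lia.
case: (ltnP i (size f)) => [ltif | leif].
  rewrite (bigD1 (Ordinal ltif)) //= big1 => [|j neji]; last first.
    by apply: other; apply: contraNneq neji => eqji; apply/eqP/val_inj.
  by rewrite -exprM coefMXn ltnNge leq_addr /= addKn addr0.
rewrite [f`_i]nth_default // coef0 big1 // => j _; apply: other.
by rewrite neq_ltn (leq_trans (ltn_ord j) leif).
Qed.

Lemma almost_armendariz_bivariate f g : almost_armendariz R -> f * g = 0 ->
  forall i j d e, prime_radical (f`_i`_d * g`_j`_e).
Proof.
move=> hR fg0 i j d e.
have [Kf szf] := coef_size_bound f; have [Kg szg] := coef_size_bound g.
pose K := maxn Kf Kg.
have szfK k : (size (f`_k)%R <= K)%N by apply: leq_trans (szf k) (leq_maxl _ _).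
have szgK k : (size (g`_k)%R <= K)%N by apply: leq_trans (szg k) (leq_maxr _ _).
have fgK0 : f.['X^K] * g.['X^K] = 0.
  by rewrite -hornerM_comm ?fg0 ?horner0 //; apply/esym/commr_polyXn.
have [P0 _ _ _ _] := prime_radical_ideal R.
case: (ltnP d K) => [ltdK | leKd];
  last by rewrite (nth_default _ (leq_trans (szfK i) leKd)) mul0r.
case: (ltnP e K) => [lteK | leKe];
  last by rewrite (nth_default _ (leq_trans (szgK j) leKe)) mulr0.
by have := hR _ _ fgK0 (K * i + d)%N (K * j + e)%N; rewrite !coef_horner_Xn.
Qed.

End KroneckerSubstitution.

Section AlmostArmendarizLaurent.
Variable R : nzRingType.
Local Notation L := (laurent R).

Lemma lfrac_common_denominator (F : {poly L}) :
  exists N (f : {poly {poly R}}), forall i, F`_i = lfrac f`_i N.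
Proof.
pose den i := (repr F`_i).2.
pose N := (\max_(i < size F) den i)%N.
exists N, (\poly_(i < size F) ((repr F`_i).1 * 'X^(N - den i))) => i.
rewrite coef_poly; case: ltnP => [ltiF | leFi]; last by rewrite nth_default ?lfrac0.
have le_den_N : (den i <= N)%N := @leq_bigmax _ (fun i : 'I_(size F) => den i) (Ordinal ltiF).
rewrite -[X in lfrac _ X](subnKC le_den_N) lfrac_mulXn.
by rewrite /lfrac /den -surjective_pairing reprK.
Qed.

Lemma almost_armendariz_laurent : almost_armendariz R -> almost_armendariz L.
Proof.
move=> hR F G FG0 i j.
have [N [f Ff]] := lfrac_common_denominator F.
have [M [g Gg]] := lfrac_common_denominator G.
have fg0 : f * g = 0.
  apply/polyP => k; rewrite coef0; apply: (lfrac_eq0 (n := N + M)).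
  transitivity (F * G)`_k; last by rewrite FG0 coef0.
  rewrite [(F * G)`_k]coefM [(f * g)`_k]coefM lfrac_lpoly rmorph_sum mulr_suml.
  by apply: eq_bigr => l _; rewrite -lfrac_lpoly Ff Gg lfracM.
have [_ _ _ _ PMr] := prime_radical_ideal L.
rewrite Ff Gg lfracM lfrac_lpoly; apply: PMr; apply: prime_radical_lpoly => k.
rewrite coefM; apply: ideal_sum (prime_radical_ideal R) _ => l _.
exact: almost_armendariz_bivariate.
Qed.

Lemma almost_armendariz_of_laurent : almost_armendariz L -> almost_armendariz R.
Proof.
move=> hL f g fg0 i j; apply/prime_radical_lpolyC; rewrite polyCM rmorphM.
pose fL := map_poly (@lpoly R \o polyC) f; pose gL := map_poly (@lpoly R \o polyC) g.
have fgL0 : fL * gL = 0 by rewrite -rmorphM fg0 rmorph0.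
by have := hL _ _ fgL0 i j; rewrite !coef_map.
Qed.

End AlmostArmendarizLaurent.

Theorem theorem2p4 (R : nzRingType) :
  almost_armendariz R <-> almost_armendariz (laurent R).
Proof.
by split; [apply: almost_armendariz_laurent | apply: almost_armendariz_of_laurent].
Qed.
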